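(* Let $G$ be a (claw, bull)-free graph with $\alpha(G)\ge 3$ and $\mathrm{diam}(G)=2$. Then $\ell(G)\ge 6$.
   Context: A claw is a graph isomorphic to $K_{1,3}$; a bull is the graph obtained from a triangle by adding two pendant edges at two different vertices. A graph is (claw, bull)-free if it has no induced claw and no induced bull. $\alpha(G)$ is the independence number of $G$, $\mathrm{diam}(G)$ its diameter, and $\ell(G)$ the length of a longest induced cycle in $G$. *)

From mathcomp Require Import all_boot.
Set Implicit Arguments. Unset Strict Implicit. Unset Printing Implicit Defensive.

Section Graphs.
Variable T : finType.
Variable e : rel T.

Definition simple_graph := symmetric e /\ irreflexive e.

Definition has_induced (n : nat) (h : rel 'I_n) :=
  exists f : 'I_n -> T, injective f /\ forall i j, e (f i) (f j) = h i j.

Definition stable (S : {set T}) := [forall x in S, forall y in S, ~~ e x y].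
Definition alpha : nat := \max_(S : {set T} | stable S) #|S|.

Definition walk (k : nat) (x y : T) :=
  exists p : seq T, [/\ size p = k, path e x p & last x p = y].
Definition dist_le (k : nat) (x y : T) := exists2 m, m <= k & walk m x y.
Definition diam_eq (d : nat) :=
  (forall x y, dist_le d x y) /\ ~ (forall x y, dist_le d.-1 x y).

Definition cycle_rel (k : nat) : rel 'I_k :=
  fun i j => (val j == (val i).+1 %% k) || (val i == (val j).+1 %% k).
(* boolean version of has_induced, needed to take a max over k *)
Definition has_inducedb (n : nat) (h : rel 'I_n) : bool :=
  [exists f : {ffun 'I_n -> T},
     injectiveb f && [forall i, forall j, e (f i) (f j) == h i j]].
Definition has_induced_cycle (k : nat) : bool :=
  (3 <= k) && has_inducedb (cycle_rel (k:=k)).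
(* length of a longest induced cycle (0 if there is none) *)
Definition longest_induced_cycle : nat :=
  \max_(k < #|T|.+1 | has_induced_cycle k) k.

End Graphs.

Definition claw_rel : rel 'I_4 :=
  fun i j => ((val i == 0) && (val j != 0)) || ((val j == 0) && (val i != 0)).

(* bull: triangle 0 1 2, pendant 3 at 0, pendant 4 at 1 *)
Definition bull_edge (a b : nat) :=
  [|| (a == 0) && (b == 1), (a == 0) && (b == 2), (a == 1) && (b == 2),
      (a == 0) && (b == 3) | (a == 1) && (b == 4)].
Definition bull_rel : rel 'I_5 :=
  fun i j => bull_edge (val i) (val j) || bull_edge (val j) (val i).

(* Take three pairwise non-adjacent vertices a, b, c.  Since the diameter is 2,
   each pair has a common neighbour: x for (a, b), y for (b, c), z for (c, a).
   Claw-freeness forbids x ~ c (else x, a, b, c is a claw), and symmetrically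
   y ~ a and z ~ b; bull-freeness then forbids x ~ y (else the triangle x y b
   with pendants a at x and c at y is a bull), and symmetrically y ~ z, z ~ x.
   Hence a x b y c z is an induced hexagon. *)
From mathcomp Require Import all_boot.

Set Implicit Arguments. Unset Strict Implicit. Unset Printing Implicit Defensive.

Definition twin_free n (h : rel 'I_n) := forall i j, h i =1 h j -> i = j.

Lemma twin_free_cycle6 : twin_free (cycle_rel (k:=6)).
Proof.
move=> i j hij; apply/val_inj.
move: (hij (inord (i.+1 %% 6))) (hij (inord ((i + 5) %% 6))).
by case: i j {hij} => [[|[|[|[|[|[|//]]]]]] ?] [[|[|[|[|[|[|//]]]]]] ?];
  rewrite /cycle_rel /= ?inordK.
Qed.

Lemma twin_free_bull : twin_free bull_rel.
Proof.
move=> i j hij; apply/val_inj; move: (hij (inord 0)) (hij (inord 1)) (hij (inord 2)).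
by case: i j {hij} => [[|[|[|[|[|//]]]]] ?] [[|[|[|[|[|//]]]]] ?];
  rewrite /bull_rel /bull_edge /= ?inordK.
Qed.

Section InducedSubgraphs.

Variables (T : finType) (e : rel T).
Hypotheses (e_sym : symmetric e) (e_irr : irreflexive e).

(* [f] cannot merge two vertices with different neighbourhoods in [h], so it is
   injective for free. *)
Lemma has_induced_twin_free n (h : rel 'I_n) (f : 'I_n -> T) :
  twin_free h -> (forall i j, e (f i) (f j) = h i j) -> has_induced e h.
Proof.
move=> h_twin_free fE; exists f; split=> // i j fij.
by apply: h_twin_free => k; rewrite -!fE fij.
Qed.

(* The leaves of a claw are twins, hence the explicit distinctness hypotheses. *)
Lemma has_induced_claw x a b c :
  e x a -> e x b -> e x c -> a != b -> b != c -> c != a ->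
  ~~ e a b -> ~~ e b c -> ~~ e c a -> has_induced e claw_rel.
Proof.
move=> xa xb xc ab bc ca /negbTE nab /negbTE nbc /negbTE nca.
have x_neq y : e x y -> x != y by apply: contraTneq => <-; rewrite e_irr.
exists (fun i => nth x [:: x; a; b; c] i); split.
  move=> i j /eqP; rewrite nth_uniq // => [/eqP/val_inj // |].
  by rewrite /= !inE !negb_or x_neq // x_neq // x_neq // ab bc eq_sym ca.
by case=> [[|[|[|[|//]]]] ?] [[|[|[|[|//]]]] ?]; rewrite //= ?e_irr // e_sym.
Qed.

Lemma has_induced_bull a x b y c :
  e a x -> e x b -> e b y -> e y c -> e x y ->
  ~~ e a b -> ~~ e b c -> ~~ e c a -> ~~ e x c -> ~~ e y a ->
  has_induced e bull_rel.
Proof.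
move=> ax xb bY yc xy /negbTE nab /negbTE nbc /negbTE nca /negbTE nxc /negbTE nya.
apply: (has_induced_twin_free (f := fun i => nth x [:: x; y; b; a; c] i)).
  exact: twin_free_bull.
by case=> [[|[|[|[|[|//]]]]] ?] [[|[|[|[|[|//]]]]] ?]; rewrite //= ?e_irr // e_sym.
Qed.

Lemma has_induced_hexagon a x b y c z :
  e a x -> e x b -> e b y -> e y c -> e c z -> e z a ->
  ~~ e a b -> ~~ e b c -> ~~ e c a -> ~~ e x y -> ~~ e y z -> ~~ e z x ->
  ~~ e x c -> ~~ e y a -> ~~ e z b -> has_induced e (cycle_rel (k:=6)).
Proof.
move=> ax xb bY yc cz za /negbTE nab /negbTE nbc /negbTE nca /negbTE nxy.
move=> /negbTE nyz /negbTE nzx /negbTE nxc /negbTE nya /negbTE nzb.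
apply: (has_induced_twin_free (f := fun i => nth x [:: a; x; b; y; c; z] i)).
  exact: twin_free_cycle6.
by case=> [[|[|[|[|[|[|//]]]]]] ?] [[|[|[|[|[|[|//]]]]]] ?]; rewrite //= ?e_irr // e_sym.
Qed.

End InducedSubgraphs.

Section GraphParameters.

Variables (T : finType) (e : rel T).

Lemma stableP (S : {set T}) :
  reflect {in S &, forall x y, ~~ e x y} (stable e S).
Proof.
apply: (iffP forallP) => [S_st x y xS yS | S_st x].
  by move/implyP/(_ xS)/forallP/(_ y)/implyP/(_ yS): (S_st x).
by apply/implyP => xS; apply/forallP => y; apply/implyP; apply: S_st.
Qed.

Lemma alpha_witness : exists2 S, stable e S & #|S| = alpha e.
Proof.
have [|S] := @eq_bigmax_cond _ (stable e) (fun S : {set T} => #|S|).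
  by apply/card_gt0P; exists set0; apply/forallP => x; rewrite inE.
by exists S.
Qed.

Lemma common_neighbour u v :
  u != v -> ~~ e u v -> dist_le e 2 u v -> exists2 w, e u w & e w v.
Proof.
move=> uv n_uv [m m_le2 [p [p_size u_p p_last]]]; subst v m.
case: p m_le2 u_p uv n_uv => [|w [|v [|//]]] //= _; first by rewrite eqxx.
  by rewrite andbT => ->.
by case/and3P=> uw wv _; exists w.
Qed.

Lemma longest_induced_cycle_ge k :
  3 <= k -> has_induced e (cycle_rel (k:=k)) -> k <= longest_induced_cycle e.
Proof.
move=> k_ge3 [f [f_inj fE]].
have k_lt : k < #|T|.+1 by rewrite ltnS -[k in k <= _]card_ord; apply: leq_card f_inj.
apply: (@leq_bigmax_cond _ _ (fun i : 'I_#|T|.+1 => val i) (Ordinal k_lt)).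
rewrite /has_induced_cycle k_ge3; apply/existsP; exists (finfun f).
apply/andP; split; first by apply/injectiveP => i j; rewrite !ffunE => /f_inj.
by apply/forallP => i; apply/forallP => j; rewrite !ffunE fE.
Qed.

End GraphParameters.

Section ClawBullFree.

Variables (T : finType) (e : rel T).
Hypotheses (e_sym : symmetric e) (e_irr : irreflexive e).
Hypotheses (claw_free : ~ has_induced e claw_rel) (bull_free : ~ has_induced e bull_rel).
Variables a b c : T.
Hypotheses (ab : a != b) (bc : b != c) (ca : c != a).
Hypotheses (nab : ~~ e a b) (nbc : ~~ e b c) (nca : ~~ e c a).

Lemma common_neighbour_not_adj_third x : e a x -> e x b -> ~~ e x c.
Proof.
move=> ax xb; apply/negP => xc; apply: claw_free.
by apply: (has_induced_claw e_sym e_irr _ xb xc ab bc ca nab nbc nca); rewrite e_sym.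
Qed.

Lemma common_neighbours_not_adj x y :
  ~~ e x c -> ~~ e y a -> e a x -> e x b -> e b y -> e y c -> ~~ e x y.
Proof.
move=> nxc nya ax xb bY yc; apply/negP => xy; apply: bull_free.
exact: (has_induced_bull e_sym e_irr ax xb bY yc xy nab nbc nca nxc nya).
Qed.

End ClawBullFree.

Theorem lemma6 (T : finType) (e : rel T) :
  simple_graph e ->
  ~ has_induced e claw_rel ->
  ~ has_induced e bull_rel ->
  3 <= alpha e ->
  diam_eq e 2 ->
  6 <= longest_induced_cycle e.
Proof.
move=> [e_sym e_irr] claw_free bull_free alpha_ge3 [diam2 _].
have [S /stableP S_stable S_card] := alpha_witness e.
rewrite -S_card in alpha_ge3.
have [a [b [c [[aS bS cS] [ab bc ca]]]]] := card_gt2P alpha_ge3.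
have [nab nbc nca] : [/\ ~~ e a b, ~~ e b c & ~~ e c a] by split; apply: S_stable.
have [x ax xb] := common_neighbour ab nab (diam2 a b).
have [y bY yc] := common_neighbour bc nbc (diam2 b c).
have [z cz za] := common_neighbour ca nca (diam2 c a).
have not_adj_third := common_neighbour_not_adj_third e_sym e_irr claw_free.
have nxc := not_adj_third _ _ _ ab bc ca nab nbc nca _ ax xb.
have nya := not_adj_third _ _ _ bc ca ab nbc nca nab _ bY yc.
have nzb := not_adj_third _ _ _ ca ab bc nca nab nbc _ cz za.
have not_adj := common_neighbours_not_adj e_sym e_irr bull_free.
have nxy := not_adj _ _ _ nab nbc nca _ _ nxc nya ax xb bY yc.
have nyz := not_adj _ _ _ nbc nca nab _ _ nya nzb bY yc cz za.
have nzx := not_adj _ _ _ nca nab nbc _ _ nzb nxc cz za ax xb.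
apply: longest_induced_cycle_ge => //.
exact: (has_induced_hexagon e_sym e_irr ax xb bY yc cz za
          nab nbc nca nxy nyz nzx nxc nya nzb).
Qed.
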